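(* Let $(V_n)_{n\ge1}$ be a sequence in $\mathcal{V}$ with $M:=\limsup_{n\to\infty}\mathcal{L}_{V_n}(0)>0$. Then $(\mathcal{L}_{V_n})_{n\ge1}$ has a pre-cutoff if and only if $(\mathcal{L}_{V_n})_{n\ge1}$ has a cutoff.
   Context: $\mathcal{V}$ denotes the class of all non-decreasing, right-continuous functions $V:(0,\infty)\to\mathbb{R}$ with $\lim_{\lambda\to0^+}V(\lambda)=0$ and $\lim_{\lambda\to\infty}V(\lambda)<\infty$; for $V\in\mathcal{V}$, $\mathcal{L}_V(t)=\int_{(0,\infty)}e^{-t\lambda}dV(\lambda)$ ($t\ge0$, Lebesgue–Stieltjes integral). With $M=\limsup_n\mathcal{L}_{V_n}(0)>0$: the sequence $(\mathcal{L}_{V_n})$ has a pre-cutoff if there exist $t_n>0$ and constants $0<A<B$ with $\lim_n\mathcal{L}_{V_n}(Bt_n)=0$ and $\liminf_n\mathcal{L}_{V_n}(At_n)>0$; it has a cutoff if there exist $t_n>0$ with $\lim_n\mathcal{L}_{V_n}(at_n)=0$ for all $a>1$ and $\lim_n\mathcal{L}_{V_n}(at_n)=M$ for all $0<a<1$ (such $t_n$ is a cutoff time). *)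

From Stdlib Require Import Reals Lra ClassicalEpsilon.
Open Scope R_scope.

(** The class V: functions on (0,oo) (values outside (0,oo) are irrelevant). *)
Definition in_classV (V : R -> R) : Prop :=
  (forall x y, 0 < x -> x <= y -> V x <= V y) /\
  (forall x, 0 < x -> forall eps, 0 < eps ->
      exists d, 0 < d /\ forall y, x <= y < x + d -> Rabs (V y - V x) < eps) /\
  (forall eps, 0 < eps -> exists d, 0 < d /\ forall y, 0 < y < d -> Rabs (V y) < eps) /\
  (exists l, forall eps, 0 < eps -> exists B, forall y, B < y -> Rabs (V y - l) < eps).

Fixpoint RS_sum (f V : R -> R) (x xi : nat -> R) (n : nat) : R :=
  match n with
  | O => 0
  | S k => RS_sum f V x xi k + f (xi k) * (V (x (S k)) - V (x k))
  end.

Definition tagged_partition (a b : R) (x xi : nat -> R) (n : nat) : Prop :=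
  x O = a /\ x n = b /\ forall i, (i < n)%nat -> x i <= xi i <= x (S i).

(** Riemann–Stieltjes integral of f against dV over [a,b] (= LS integral over (a,b]
    for continuous f and right-continuous nondecreasing V). *)
Definition is_RS_integral (f V : R -> R) (a b I : R) : Prop :=
  forall eps, 0 < eps -> exists delta, 0 < delta /\
    forall n x xi, tagged_partition a b x xi n ->
      (forall i, (i < n)%nat -> x (S i) - x i < delta) ->
      Rabs (RS_sum f V x xi n - I) < eps.

Definition is_LS_integral_pos (f V : R -> R) (I : R) : Prop :=
  forall eps, 0 < eps -> exists d B, 0 < d /\
    forall a b, 0 < a < d -> B < b -> a < b ->
      exists I', is_RS_integral f V a b I' /\ Rabs (I' - I) < eps.

Definition laplace (V : R -> R) (t : R) : R :=
  epsilon (inhabits 0) (is_LS_integral_pos (fun l => exp (- (t * l))) V).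

(** Extended reals, for limsup (which may be +oo). *)
Inductive ER : Type := Fin (r : R) | PInf | MInf.

Definition is_limsup (u : nat -> R) (M : ER) : Prop :=
  match M with
  | Fin l => forall eps, 0 < eps ->
      (forall N, exists n, (N <= n)%nat /\ l - eps < u n) /\
      (exists N, forall n, (N <= n)%nat -> u n < l + eps)
  | PInf => forall K N, exists n, (N <= n)%nat /\ K < u n
  | MInf => forall K, exists N, forall n, (N <= n)%nat -> u n < K
  end.

Definition ER_pos (M : ER) : Prop :=
  match M with Fin l => 0 < l | PInf => True | MInf => False end.

Definition tends_to (u : nat -> R) (M : ER) : Prop :=
  match M with
  | Fin l => Un_cv u l
  | PInf => forall K, exists N, forall n, (N <= n)%nat -> K < u n
  | MInf => forall K, exists N, forall n, (N <= n)%nat -> u n < K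
  end.

Definition liminf_pos (u : nat -> R) : Prop :=
  exists c, 0 < c /\ exists N, forall n, (N <= n)%nat -> c < u n.

Definition has_precutoff (V : nat -> R -> R) : Prop :=
  exists t : nat -> R, (forall n, 0 < t n) /\
    exists A B, 0 < A /\ A < B /\
      Un_cv (fun n => laplace (V n) (B * t n)) 0 /\
      liminf_pos (fun n => laplace (V n) (A * t n)).

Definition has_cutoff (V : nat -> R -> R) (M : ER) : Prop :=
  exists t : nat -> R, (forall n, 0 < t n) /\
    (forall a, 1 < a -> Un_cv (fun n => laplace (V n) (a * t n)) 0) /\
    (forall a, 0 < a < 1 -> tends_to (fun n => laplace (V n) (a * t n)) M).

From Stdlib Require Import Reals Lra Lia ClassicalEpsilon Classical.
Open Scope R_scope.

(* For V in the class, the transform L(t) is the supremum of the Darboux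
   integrals of exp(-t l) dV(l) over compact intervals of (0,oo); Cauchy-Schwarz
   for Riemann-Stieltjes sums makes it midpoint log-convex, and it is
   nonnegative and nonincreasing.  Iterating midpoint log-convexity gives
   L(x + (z - x) / 2^k) ^ 2^k <= L(x) ^ (2^k - 1) * L(z).  Given a pre-cutoff
   (t_n, A, B), let T_n in [A t_n, B t_n] be the time at which L_n drops below
   a level h < liminf L_n(A t_n).  Taking z = B t_n, where L_n -> 0, the
   inequality forces L_n(a T_n) -> 0 for a > 1 and L_n(a T_n) -> +oo for
   a < 1.  Hence L_n(0) -> +oo, so M = +oo and T_n is a cutoff time.  The
   converse holds with A = 1/2 and B = 2. *)

Lemma le_of_le_add_mul (u v C : R) :
  0 <= C -> (forall e, 0 < e <= 1 -> u <= v + C * e) -> u <= v.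
Proof.
  intros HC H. apply Rle_plus_epsilon. intros e He.
  set (e' := Rmin 1 (e / (C + 1))).
  assert (He' : 0 < e' <= 1).
  { unfold e'. split; [apply Rmin_glb_lt; [lra | apply Rdiv_lt_0_compat; lra] | apply Rmin_l]. }
  assert (HCe : C * e' <= e).
  { apply Rle_trans with (C * (e / (C + 1))).
    - apply Rmult_le_compat_l; [lra | apply Rmin_r].
    - assert (0 < e / (C + 1)) by (apply Rdiv_lt_0_compat; lra).
      apply Rle_trans with ((C + 1) * (e / (C + 1))); [nra | right; field; lra]. }
  specialize (H e' He'). lra.
Qed.

Lemma lub_approx (E : R -> Prop) (J e : R) :
  is_lub E J -> 0 < e -> exists s, E s /\ J - e < s.
Proof.
  intros [_ Hlub] He. apply NNPP. intros Hno.
  enough (J <= J - e) by lra.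
  apply Hlub. intros s Hs. apply Rnot_lt_le. intros Hlt. apply Hno. now exists s.
Qed.

Definition nonincreasing_pos (f : R -> R) : Prop :=
  forall u v, 0 < u <= v -> f v <= f u.

Definition nondecreasing_pos (V : R -> R) : Prop :=
  forall u v, 0 < u -> u <= v -> V u <= V v.

Definition lipschitz_pos (f : R -> R) (K : R) : Prop :=
  forall u v, 0 < u <= v -> f u - f v <= K * (v - u).

Definition partition (a b : R) (x : nat -> R) (n : nat) : Prop :=
  x O = a /\ x n = b /\ forall i, (i < n)%nat -> x i <= x (S i).

Definition mesh_lt (x : nat -> R) (n : nat) (d : R) : Prop :=
  forall i, (i < n)%nat -> x (S i) - x i < d.

Definition two_point (a b : R) (i : nat) : R :=
  match i with O => a | S _ => b end.

(* Named for nonincreasing [f]: left-endpoint tags then give upper sums. *)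
Definition upper_sum (f V : R -> R) (x : nat -> R) (n : nat) : R := RS_sum f V x x n.

Definition lower_sum (f V : R -> R) (x : nat -> R) (n : nat) : R :=
  RS_sum f V x (fun i => x (S i)) n.

Lemma partition_bounds a b x n :
  partition a b x n -> forall i, (i <= n)%nat -> a <= x i <= b.
Proof.
  intros [H0 [Hn Hs]].
  assert (Hmono : forall i j, (i <= j <= n)%nat -> x i <= x j).
  { intros i j [Hij Hjn]. revert Hjn. induction Hij as [|j Hij IH]; intros Hjn; [lra|].
    apply Rle_trans with (x j); [apply IH; lia | apply Hs; lia]. }
  intros i Hi. rewrite <- H0, <- Hn. split; apply Hmono; lia.
Qed.

Lemma partition_prefix a b x n : partition a b x (S n) -> partition a (x n) x n.
Proof. intros [H0 [_ Hs]]. split; [auto | split; [auto |]]. intros i Hi. apply Hs; lia. Qed.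

Lemma partition_two_point a b : a <= b -> partition a b (two_point a b) 1.
Proof. intros Hab. repeat split. intros [|i] Hi; simpl; [lra | lia]. Qed.

Lemma tagged_partition_partition a b x xi n :
  tagged_partition a b x xi n -> partition a b x n.
Proof. intros [H0 [Hn Ht]]. repeat split; auto. intros i Hi. specialize (Ht i Hi). lra. Qed.

Lemma partition_tagged_left a b x n : partition a b x n -> tagged_partition a b x x n.
Proof.
  intros [H0 [Hn Hs]]. split; [auto | split; [auto |]].
  intros i Hi. specialize (Hs i Hi). lra.
Qed.

Lemma partition_fine_ex a b d :
  a <= b -> 0 < d -> exists x n, partition a b x n /\ mesh_lt x n d.
Proof.
  intros Hab Hd.
  destruct (archimed_cor1 (d / (b - a + 1))) as [N [HN HN0]].
  { apply Rdiv_lt_0_compat; lra. }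
  assert (hN : 0 < INR N) by (apply lt_0_INR; auto).
  set (h := (b - a) / INR N).
  assert (hh : 0 <= h) by (apply Rmult_le_pos; [lra | left; apply Rinv_0_lt_compat; auto]).
  assert (hhd : h < d).
  { assert (h * INR N = b - a) by (unfold h; field; lra).
    apply (Rmult_lt_compat_l (INR N * (b - a + 1))) in HN; [|nra].
    replace (INR N * (b - a + 1) * / INR N) with (b - a + 1) in HN by (field; lra).
    replace (INR N * (b - a + 1) * (d / (b - a + 1))) with (INR N * d) in HN by (field; lra).
    nra. }
  exists (fun i => a + INR i * h), N. repeat split.
  - simpl. ring.
  - unfold h. field. lra.
  - intros i _. rewrite S_INR. lra.
  - intros i _. rewrite S_INR. lra.
Qed.

Lemma RS_sum_le f1 f2 V1 V2 x1 x2 xi1 xi2 n :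
  (forall i, (i < n)%nat ->
     f1 (xi1 i) * (V1 (x1 (S i)) - V1 (x1 i)) <= f2 (xi2 i) * (V2 (x2 (S i)) - V2 (x2 i))) ->
  RS_sum f1 V1 x1 xi1 n <= RS_sum f2 V2 x2 xi2 n.
Proof.
  induction n as [|n IH]; intros H; simpl; [lra|].
  apply Rplus_le_compat; [apply IH; intros; apply H; lia | apply H; lia].
Qed.

(** * Darboux integrals of nonincreasing integrands *)

Section Darboux.

Variables f V : R -> R.
Hypothesis f_nonincr : nonincreasing_pos f.
Hypothesis f_nonneg : forall u, 0 < u -> 0 <= f u.
Hypothesis V_nondecr : nondecreasing_pos V.

Lemma partition_increment_nonneg a b x n i :
  0 < a -> partition a b x n -> (i < n)%nat -> 0 <= V (x (S i)) - V (x i).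
Proof.
  intros Ha Hp Hi. pose proof (partition_bounds _ _ _ _ Hp i ltac:(lia)).
  destruct Hp as [_ [_ Hs]]. specialize (Hs i Hi).
  assert (V (x i) <= V (x (S i))) by (apply V_nondecr; lra). lra.
Qed.

Lemma tagged_sum_between a b x xi n :
  0 < a -> tagged_partition a b x xi n ->
  lower_sum f V x n <= RS_sum f V x xi n <= upper_sum f V x n.
Proof.
  intros Ha Htp. pose proof (tagged_partition_partition _ _ _ _ _ Htp) as Hp.
  destruct Htp as [_ [_ Ht]].
  split; apply RS_sum_le; intros i Hi; specialize (Ht i Hi);
    pose proof (partition_bounds _ _ _ _ Hp i ltac:(lia));
    pose proof (partition_increment_nonneg a b x n i Ha Hp Hi);
    apply Rmult_le_compat_r; auto; apply f_nonincr; lra.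
Qed.

(* Its increments dominate the lower-sum terms of any other partition, which
   compares lower and upper sums without common refinements. *)
Definition upper_sum_upto (x : nat -> R) (n : nat) (w : R) : R :=
  RS_sum f (fun u => V (Rmin u w)) x x n.

Lemma upper_sum_upto_growth a b x n z w :
  0 < a -> partition a b x n -> a <= z <= w ->
  f w * (V (Rmin b w) - V (Rmin b z)) <= upper_sum_upto x n w - upper_sum_upto x n z.
Proof.
  intros Ha. revert b.
  induction n as [|n IH]; intros b Hp Hzw; unfold upper_sum_upto in *; simpl.
  - destruct Hp as [H0 [Hn _]]. simpl in Hn. rewrite <- Hn, H0, !Rmin_left by lra. lra.
  - assert (IH' := IH (x n) (partition_prefix _ _ _ _ Hp) Hzw).
    pose proof (partition_bounds _ _ _ _ Hp n ltac:(lia)) as [hxn _].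
    destruct Hp as [_ [Hb Hs]]. specialize (Hs n ltac:(lia)). rewrite Hb in Hs |- *.
    destruct (Rle_dec w (x n)) as [Hw | Hw].
    + rewrite (Rmin_right (x n) w), (Rmin_right b w), (Rmin_right (x n) z), (Rmin_right b z)
        in * by lra.
      lra.
    + assert (hf : f w <= f (x n)) by (apply f_nonincr; lra).
      rewrite (Rmin_left (x n) w) in * by lra.
      assert (hD : 0 <= V (Rmin b w) - V (x n) - (V (Rmin b z) - V (Rmin (x n) z))).
      { destruct (Rle_dec z (x n)).
        - rewrite (Rmin_right (x n) z), (Rmin_right b z) by lra.
          assert (V (x n) <= V (Rmin b w)) by (apply V_nondecr; [lra | apply Rmin_glb; lra]).
          lra.
        - rewrite (Rmin_left (x n) z) by lra.
          assert (V (Rmin b z) <= V (Rmin b w)).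
          { apply V_nondecr; [apply Rmin_glb_lt; lra |].
            unfold Rmin; repeat destruct Rle_dec; lra. }
          lra. }
      assert (f w * (V (Rmin b w) - V (x n) - (V (Rmin b z) - V (Rmin (x n) z)))
              <= f (x n) * (V (Rmin b w) - V (x n) - (V (Rmin b z) - V (Rmin (x n) z))))
        by (apply Rmult_le_compat_r; auto).
      lra.
Qed.

Lemma upper_sum_upto_end a b x n :
  partition a b x n -> upper_sum_upto x n b = upper_sum f V x n.
Proof.
  intros Hp. unfold upper_sum_upto, upper_sum.
  apply Rle_antisym; apply RS_sum_le; intros i Hi;
    pose proof (partition_bounds _ _ _ _ Hp i ltac:(lia));
    pose proof (partition_bounds _ _ _ _ Hp (S i) ltac:(lia));
    rewrite (Rmin_left (x i)), (Rmin_left (x (S i))) by lra; lra.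
Qed.

Lemma upper_sum_upto_start a b x n :
  partition a b x n -> upper_sum_upto x n a = 0.
Proof.
  revert b. induction n as [|n IH]; intros b Hp; unfold upper_sum_upto in *; simpl; [lra|].
  rewrite (IH (x n) (partition_prefix _ _ _ _ Hp)).
  pose proof (partition_bounds _ _ _ _ Hp n ltac:(lia)).
  pose proof (partition_bounds _ _ _ _ Hp (S n) ltac:(lia)).
  rewrite (Rmin_right (x n) a), (Rmin_right (x (S n)) a) by lra. ring.
Qed.

Lemma lower_sum_le_upper_sum_upto a b c x n y m :
  0 < a -> partition a b x n -> partition a c y m -> c <= b ->
  lower_sum f V y m <= upper_sum_upto x n c - upper_sum_upto x n a.
Proof.
  intros Ha Hx. revert c.
  induction m as [|m IH]; intros c Hy Hcb; unfold lower_sum in *; simpl.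
  - destruct Hy as [H0 [Hn _]]. simpl in Hn. rewrite <- Hn, H0. lra.
  - pose proof (partition_bounds _ _ _ _ Hy m ltac:(lia)) as [hym hymc].
    assert (IH' := IH (y m) (partition_prefix _ _ _ _ Hy) ltac:(lra)).
    destruct Hy as [_ [Hc _]]. rewrite Hc.
    pose proof (upper_sum_upto_growth a b x n (y m) c Ha Hx ltac:(lra)) as Hg.
    rewrite (Rmin_right b c), (Rmin_right b (y m)) in Hg by lra.
    lra.
Qed.

Lemma lower_sum_le_upper_sum a b x n y m :
  0 < a -> partition a b x n -> partition a b y m -> lower_sum f V y m <= upper_sum f V x n.
Proof.
  intros Ha Hx Hy.
  pose proof (lower_sum_le_upper_sum_upto a b b x n y m Ha Hx Hy (Rle_refl b)) as H.
  rewrite (upper_sum_upto_end a b x n), (upper_sum_upto_start a b x n) in H by auto. lra.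
Qed.

Definition is_darboux (a b I : R) : Prop :=
  (forall y m, partition a b y m -> lower_sum f V y m <= I) /\
  (forall x n, partition a b x n -> I <= upper_sum f V x n).

Lemma darboux_ex a b : 0 < a -> a <= b -> exists I, is_darboux a b I.
Proof.
  intros Ha Hab.
  set (E := fun s => exists y m, partition a b y m /\ s = lower_sum f V y m).
  pose proof (partition_two_point a b Hab) as Htwo.
  assert (HE : bound E).
  { exists (upper_sum f V (two_point a b) 1).
    intros s [y [m [Hy ->]]]. eapply lower_sum_le_upper_sum; eauto. }
  assert (HE0 : exists s, E s) by (eexists; exists (two_point a b), 1%nat; eauto).
  destruct (completeness E HE HE0) as [I [Hub Hlub]].
  exists I. split.
  - intros y m Hy. apply Hub. exists y, m. auto.
  - intros x n Hx. apply Hlub. intros s [y [m [Hy ->]]]. eapply lower_sum_le_upper_sum; eauto.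
Qed.

Lemma darboux_nonneg a b I : 0 < a <= b -> is_darboux a b I -> 0 <= I.
Proof.
  intros Hab [Hlow _]. specialize (Hlow _ _ (partition_two_point a b ltac:(lra))).
  unfold lower_sum in Hlow; simpl in Hlow.
  assert (V a <= V b) by (apply V_nondecr; lra).
  assert (0 <= f b) by (apply f_nonneg; lra).
  nra.
Qed.

Lemma clamp_increment_le a b u v :
  0 < u <= v -> 0 < a <= b ->
  f (Rmin (Rmax u a) b) * (V (Rmin (Rmax v a) b) - V (Rmin (Rmax u a) b))
  <= f u * (V v - V u).
Proof.
  intros Huv Hab.
  assert (V u <= V v) by (apply V_nondecr; lra).
  assert (0 <= f u) by (apply f_nonneg; lra).
  destruct (Rle_dec v a).
  { rewrite (Rmax_right u a), (Rmax_right v a), (Rmin_left a b) by lra. nra. }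
  destruct (Rle_dec b u).
  { rewrite (Rmax_left u a), (Rmax_left v a), (Rmin_right u b), (Rmin_right v b) by lra. nra. }
  rewrite (Rmax_left v a) by lra.
  set (cu := Rmin (Rmax u a) b). set (cv := Rmin v b).
  assert (u <= cu /\ cu <= b) by (unfold cu, Rmin, Rmax; repeat destruct Rle_dec; lra).
  assert (cu <= cv <= v) by (unfold cu, cv, Rmin, Rmax; repeat destruct Rle_dec; lra).
  assert (f cu <= f u) by (apply f_nonincr; lra).
  assert (0 <= f cu) by (apply f_nonneg; lra).
  assert (V cu <= V cv) by (apply V_nondecr; lra).
  assert (V u <= V cu) by (apply V_nondecr; lra).
  assert (V cv <= V v) by (apply V_nondecr; lra).
  nra.
Qed.

Variable K : R.
Hypothesis K_nonneg : 0 <= K.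
Hypothesis f_lipschitz : lipschitz_pos f K.

Lemma upper_sub_lower_le a b x n d :
  0 < a -> partition a b x n -> mesh_lt x n d ->
  upper_sum f V x n - lower_sum f V x n <= K * d * (V b - V a).
Proof.
  intros Ha. revert b.
  induction n as [|n IH]; intros b Hp Hd; unfold upper_sum, lower_sum in *; simpl.
  - destruct Hp as [H0 [Hn _]]. simpl in Hn. rewrite <- Hn, H0. lra.
  - assert (IH' := IH (x n) (partition_prefix _ _ _ _ Hp) ltac:(intros i Hi; apply Hd; lia)).
    pose proof (partition_bounds _ _ _ _ Hp n ltac:(lia)) as [hxn _].
    pose proof (partition_increment_nonneg a b x (S n) n Ha Hp ltac:(lia)) as hinc.
    destruct Hp as [_ [Hb Hs]]. specialize (Hs n ltac:(lia)). specialize (Hd n ltac:(lia)).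
    rewrite Hb in hinc, Hs, Hd |- *.
    pose proof (f_lipschitz (x n) b ltac:(lra)).
    assert (K * (b - x n) <= K * d) by (apply Rmult_le_compat_l; lra).
    assert ((f (x n) - f b) * (V b - V (x n)) <= K * d * (V b - V (x n)))
      by (apply Rmult_le_compat_r; lra).
    lra.
Qed.

Lemma darboux_upper_sum_close a b I x n d :
  0 < a -> is_darboux a b I -> partition a b x n -> mesh_lt x n d ->
  I <= upper_sum f V x n <= I + K * d * (V b - V a).
Proof.
  intros Ha [Hlow Hup] Hp Hd.
  pose proof (Hlow x n Hp). pose proof (Hup x n Hp).
  pose proof (upper_sub_lower_le a b x n d Ha Hp Hd). lra.
Qed.

Lemma darboux_is_RS_integral a b I :
  0 < a -> a <= b -> is_darboux a b I -> is_RS_integral f V a b I.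
Proof.
  intros Ha Hab HI e He.
  assert (hV : V a <= V b) by (apply V_nondecr; lra).
  set (D := K * (V b - V a)). assert (0 <= D) by (apply Rmult_le_pos; lra).
  exists (e / (D + 1)). split; [apply Rdiv_lt_0_compat; lra |].
  intros n x xi Htp Hd.
  pose proof (tagged_partition_partition _ _ _ _ _ Htp) as Hp.
  destruct HI as [Hlow Hup]. pose proof (Hlow x n Hp). pose proof (Hup x n Hp).
  pose proof (upper_sub_lower_le a b x n _ Ha Hp Hd).
  pose proof (tagged_sum_between a b x xi n Ha Htp).
  assert (K * (e / (D + 1)) * (V b - V a) < e).
  { assert (HD1 : D + 1 <> 0) by lra.
    replace (K * (e / (D + 1)) * (V b - V a)) with (e - e / (D + 1))
      by (unfold D in *; field; exact HD1).
    assert (0 < e / (D + 1)) by (apply Rdiv_lt_0_compat; lra). lra. }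
  apply Rabs_def1; lra.
Qed.

Lemma darboux_interval_mono a b a' b' I I' :
  0 < a' -> a' <= a -> a <= b -> b <= b' ->
  is_darboux a b I -> is_darboux a' b' I' -> I <= I'.
Proof.
  intros Ha' Ha Hab Hb [_ Hup] HI'.
  assert (V a' <= V b') by (apply V_nondecr; lra).
  apply (le_of_le_add_mul _ _ (K * (V b' - V a'))); [apply Rmult_le_pos; lra |].
  intros d Hd.
  destruct (partition_fine_ex a' b' d ltac:(lra) ltac:(lra)) as [x [n [Hp Hmesh]]].
  pose proof (darboux_upper_sum_close a' b' I' x n d Ha' HI' Hp Hmesh).
  set (c := fun i => Rmin (Rmax (x i) a) b).
  assert (Hc : partition a b c n).
  { destruct Hp as [Hx0 [Hxn Hs]]. split; [|split]; unfold c.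
    - rewrite Hx0, Rmax_right, Rmin_left; lra.
    - rewrite Hxn, Rmax_left, Rmin_right; lra.
    - intros i Hi. specialize (Hs i Hi). unfold Rmin, Rmax; repeat destruct Rle_dec; lra. }
  assert (upper_sum f V c n <= upper_sum f V x n).
  { apply RS_sum_le. intros i Hi.
    pose proof (partition_bounds _ _ _ _ Hp i ltac:(lia)).
    destruct Hp as [_ [_ Hs]]. specialize (Hs i Hi).
    apply clamp_increment_le; lra. }
  specialize (Hup c n Hc). lra.
Qed.

End Darboux.

Lemma RS_integral_unique f V a b I J :
  a <= b -> is_RS_integral f V a b I -> is_RS_integral f V a b J -> I = J.
Proof.
  intros Hab HI HJ. destruct (Req_dec I J) as [|Hne]; [auto | exfalso].
  set (e := Rabs (I - J) / 2).
  assert (He : 0 < e) by (unfold e; pose proof (Rabs_pos_lt (I - J) ltac:(lra)); lra).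
  destruct (HI e He) as [dI [HdI HI']]. destruct (HJ e He) as [dJ [HdJ HJ']].
  destruct (partition_fine_ex a b (Rmin dI dJ) Hab ltac:(apply Rmin_glb_lt; auto))
    as [x [n [Hp Hmesh]]].
  pose proof (partition_tagged_left a b x n Hp) as Ht.
  pose proof (Rmin_l dI dJ). pose proof (Rmin_r dI dJ).
  specialize (HI' n x x Ht ltac:(intros i Hi; specialize (Hmesh i Hi); lra)).
  specialize (HJ' n x x Ht ltac:(intros i Hi; specialize (Hmesh i Hi); lra)).
  unfold e in *. revert HI' HJ'. unfold Rabs; repeat destruct Rcase_abs; lra.
Qed.

Lemma cross_term_le A B C P Q R :
  0 <= B -> 0 <= C -> 0 <= Q -> 0 <= R -> A ^ 2 <= B * C -> P ^ 2 = Q * R ->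
  2 * A * P <= B * R + C * Q.
Proof.
  intros HB HC HQ HR HA HP.
  assert ((2 * A * P) ^ 2 <= (B * R + C * Q) ^ 2).
  { replace ((2 * A * P) ^ 2) with (4 * A ^ 2 * P ^ 2) by ring. rewrite HP.
    assert (4 * A ^ 2 * (Q * R) <= 4 * (B * C) * (Q * R))
      by (apply Rmult_le_compat_r; [apply Rmult_le_pos |]; lra).
    assert (0 <= (B * R - C * Q) ^ 2) by apply pow2_ge_0.
    nra. }
  assert (0 <= B * R + C * Q) by (assert (0 <= B * R) by (apply Rmult_le_pos; lra);
                                   assert (0 <= C * Q) by (apply Rmult_le_pos; lra); lra).
  nra.
Qed.

Lemma RS_sum_cauchy_schwarz f g h V x xi n :
  (forall i, (i < n)%nat ->
     0 <= V (x (S i)) - V (x i) /\ 0 <= f (xi i) /\ 0 <= h (xi i) /\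
     g (xi i) ^ 2 = f (xi i) * h (xi i)) ->
  0 <= RS_sum f V x xi n /\ 0 <= RS_sum h V x xi n /\
  RS_sum g V x xi n ^ 2 <= RS_sum f V x xi n * RS_sum h V x xi n.
Proof.
  induction n as [|n IH]; intros H; cbn [RS_sum]; [simpl; lra |].
  destruct (IH ltac:(intros; apply H; lia)) as [hB [hC hA]].
  destruct (H n ltac:(lia)) as [hw [hQ [hR hP]]].
  set (A := RS_sum g V x xi n) in *. set (B := RS_sum f V x xi n) in *.
  set (C := RS_sum h V x xi n) in *. set (w := V (x (S n)) - V (x n)) in *.
  set (P := g (xi n)) in *. set (Q := f (xi n)) in *. set (R := h (xi n)) in *.
  pose proof (cross_term_le A B C P Q R hB hC hQ hR hA hP).
  assert (0 <= Q * w) by (apply Rmult_le_pos; auto).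
  assert (0 <= R * w) by (apply Rmult_le_pos; auto).
  assert (w * (2 * A * P) <= w * (B * R + C * Q)) by (apply Rmult_le_compat_l; auto).
  split; [lra | split; [lra |]].
  replace ((A + P * w) ^ 2) with (A ^ 2 + w * (2 * A * P) + P ^ 2 * (w * w)) by ring.
  replace ((B + Q * w) * (C + R * w)) with (B * C + w * (B * R + C * Q) + Q * R * (w * w)) by ring.
  rewrite hP. lra.
Qed.

Section IntegrandComparison.

Variables (V : R -> R) (K a b : R).
Hypothesis V_nondecr : nondecreasing_pos V.
Hypothesis K_nonneg : 0 <= K.
Hypothesis a_pos : 0 < a.
Hypothesis a_le_b : a <= b.

Lemma upper_sum_le_integrand f g x n :
  partition a b x n -> (forall u, a <= u <= b -> f u <= g u) ->
  upper_sum f V x n <= upper_sum g V x n.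
Proof.
  intros Hp Hfg. apply RS_sum_le. intros i Hi.
  pose proof (partition_bounds _ _ _ _ Hp i ltac:(lia)).
  pose proof (partition_increment_nonneg V V_nondecr a b x n i a_pos Hp Hi).
  apply Rmult_le_compat_r; auto.
Qed.

Lemma darboux_le_integrand f g I J :
  lipschitz_pos g K -> (forall u, a <= u <= b -> f u <= g u) ->
  is_darboux f V a b I -> is_darboux g V a b J -> I <= J.
Proof.
  intros HgK Hfg [_ HI] HJ.
  assert (V a <= V b) by (apply V_nondecr; lra).
  apply (le_of_le_add_mul _ _ (K * (V b - V a))); [apply Rmult_le_pos; lra |].
  intros d Hd.
  destruct (partition_fine_ex a b d a_le_b ltac:(lra)) as [x [n [Hp Hmesh]]].
  pose proof (darboux_upper_sum_close g V V_nondecr K K_nonneg HgK a b J x n d a_pos HJ Hp Hmesh).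
  pose proof (HI x n Hp). pose proof (upper_sum_le_integrand f g x n Hp Hfg).
  lra.
Qed.

Lemma darboux_cauchy_schwarz f g h If Ig Ih :
  (forall u, 0 < u -> 0 <= f u) -> (forall u, 0 < u -> 0 <= g u) ->
  (forall u, 0 < u -> 0 <= h u) -> (forall u, 0 < u -> g u ^ 2 = f u * h u) ->
  lipschitz_pos f K -> lipschitz_pos h K ->
  is_darboux f V a b If -> is_darboux g V a b Ig -> is_darboux h V a b Ih -> Ig * Ig <= If * Ih.
Proof.
  intros Hf0 Hg0 Hh0 Hfgh HfK HhK HIf HIg HIh.
  pose proof (darboux_nonneg f V Hf0 V_nondecr a b If ltac:(lra) HIf).
  pose proof (darboux_nonneg g V Hg0 V_nondecr a b Ig ltac:(lra) HIg).
  pose proof (darboux_nonneg h V Hh0 V_nondecr a b Ih ltac:(lra) HIh).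
  assert (V a <= V b) by (apply V_nondecr; lra).
  set (D := K * (V b - V a)). assert (0 <= D) by (apply Rmult_le_pos; lra).
  apply (le_of_le_add_mul _ _ (D * (If + Ih + D))); [apply Rmult_le_pos; lra |].
  intros e He.
  destruct (partition_fine_ex a b e a_le_b ltac:(lra)) as [x [n [Hp Hmesh]]].
  pose proof (darboux_upper_sum_close f V V_nondecr K K_nonneg HfK a b If x n e a_pos HIf Hp Hmesh).
  pose proof (darboux_upper_sum_close h V V_nondecr K K_nonneg HhK a b Ih x n e a_pos HIh Hp Hmesh).
  destruct HIg as [_ HIg]. specialize (HIg x n Hp).
  destruct (RS_sum_cauchy_schwarz f g h V x x n) as [HUf [HUh HUg]].
  { intros i Hi. pose proof (partition_bounds _ _ _ _ Hp i ltac:(lia)).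
    repeat split; [apply (partition_increment_nonneg V V_nondecr a b x n i a_pos Hp Hi)
                  | apply Hf0 | apply Hh0 | apply Hfgh]; lra. }
  fold (upper_sum f V x n) (upper_sum g V x n) (upper_sum h V x n) in *.
  replace (K * e * (V b - V a)) with (D * e) in * by (unfold D; ring).
  assert (Ig * Ig <= upper_sum g V x n ^ 2) by nra.
  assert (upper_sum f V x n * upper_sum h V x n <= (If + D * e) * (Ih + D * e)).
  { apply Rmult_le_compat; lra. }
  assert (D * D * (e * e) <= D * D * e) by (apply Rmult_le_compat_l; nra).
  nra.
Qed.

End IntegrandComparison.

(** * The Laplace-Stieltjes transform *)

Definition exp_kernel (t l : R) : R := exp (- (t * l)).

Lemma exp_le_mono x y : x <= y -> exp x <= exp y.
Proof. intros [H | ->]; [left; now apply exp_increasing | lra]. Qed.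

Lemma exp_kernel_bounds t u : 0 <= t -> 0 <= u -> 0 < exp_kernel t u <= 1.
Proof.
  intros Ht Hu. unfold exp_kernel. split; [apply exp_pos |].
  rewrite <- exp_0. apply exp_le_mono. nra.
Qed.

Lemma exp_kernel_nonneg t : 0 <= t -> forall u, 0 < u -> 0 <= exp_kernel t u.
Proof. intros Ht u Hu. left. apply exp_kernel_bounds; lra. Qed.

Lemma exp_kernel_nonincr t : 0 <= t -> nonincreasing_pos (exp_kernel t).
Proof. intros Ht u v Huv. unfold exp_kernel. apply exp_le_mono. nra. Qed.

Lemma exp_kernel_antitone s t u : 0 <= s <= t -> 0 <= u -> exp_kernel t u <= exp_kernel s u.
Proof. intros Hst Hu. unfold exp_kernel. apply exp_le_mono. nra. Qed.

Lemma exp_kernel_lipschitz t K : 0 <= t <= K -> lipschitz_pos (exp_kernel t) K.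
Proof.
  intros Ht u v Huv.
  assert (Hsplit : exp_kernel t v = exp_kernel t u * exp (- (t * (v - u))))
    by (unfold exp_kernel; rewrite <- exp_plus; f_equal; ring).
  pose proof (exp_ineq1_le (- (t * (v - u)))).
  pose proof (exp_kernel_bounds t u ltac:(lra) ltac:(lra)).
  assert (t * (v - u) <= K * (v - u)) by (apply Rmult_le_compat_r; lra).
  assert (0 <= t * (v - u)) by (apply Rmult_le_pos; lra).
  rewrite Hsplit. set (E := exp (- (t * (v - u)))) in *. set (eu := exp_kernel t u) in *.
  assert (eu * (1 - E) <= eu * (t * (v - u))) by (apply Rmult_le_compat_l; lra).
  assert (eu * (t * (v - u)) <= 1 * (t * (v - u))) by (apply Rmult_le_compat_r; lra).
  lra.
Qed.

Lemma exp_kernel_midpoint s t u :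
  exp_kernel ((s + t) / 2) u ^ 2 = exp_kernel s u * exp_kernel t u.
Proof. unfold exp_kernel. simpl. rewrite Rmult_1_r, <- !exp_plus. f_equal. field. Qed.

Section Laplace.

Variable V : R -> R.
Hypothesis V_classV : in_classV V.

Let V_nondecr : nondecreasing_pos V := proj1 V_classV.

Lemma classV_bounds : exists l, forall x, 0 < x -> 0 <= V x <= l.
Proof.
  pose proof V_classV as [HV [_ [Hzero [l Hlim]]]]. exists l. intros x Hx. split.
  - apply Rnot_lt_le. intros Hneg.
    destruct (Hzero (- V x) ltac:(lra)) as [d [Hd Hsmall]].
    set (y := Rmin x (d / 2)).
    assert (0 < y) by (apply Rmin_glb_lt; lra).
    assert (y < d) by (pose proof (Rmin_r x (d / 2)); unfold y; lra).
    assert (V y <= V x) by (apply HV; [lra | apply Rmin_l]).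
    specialize (Hsmall y ltac:(lra)). revert Hsmall. unfold Rabs; destruct Rcase_abs; lra.
  - apply Rnot_lt_le. intros Hbig.
    destruct (Hlim (V x - l) ltac:(lra)) as [B HB].
    set (y := Rmax B x + 1).
    specialize (HB y ltac:(pose proof (Rmax_l B x); unfold y; lra)).
    assert (V x <= V y) by (apply HV; [lra | pose proof (Rmax_r B x); unfold y; lra]).
    revert HB. unfold Rabs; destruct Rcase_abs; lra.
Qed.

Lemma darboux_exp_ex t a b :
  0 <= t -> 0 < a <= b ->
  exists I, is_darboux (exp_kernel t) V a b I /\ is_RS_integral (exp_kernel t) V a b I.
Proof.
  intros Ht Hab.
  destruct (darboux_ex _ V (exp_kernel_nonincr t Ht) V_nondecr a b ltac:(lra) ltac:(lra)) as [I HI].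
  exists I. split; [exact HI |].
  exact (darboux_is_RS_integral _ V (exp_kernel_nonincr t Ht) V_nondecr t Ht
           (exp_kernel_lipschitz t t ltac:(lra)) a b I ltac:(lra) ltac:(lra) HI).
Qed.

Definition darboux_values (t s : R) : Prop :=
  exists a b, 0 < a <= b /\ is_darboux (exp_kernel t) V a b s.

Lemma darboux_values_bound t : 0 <= t -> bound (darboux_values t).
Proof.
  intros Ht. destruct classV_bounds as [l Hl]. exists l.
  intros s [a [b [Hab [_ Hup]]]].
  specialize (Hup _ _ (partition_two_point a b ltac:(lra))).
  unfold upper_sum in Hup; simpl in Hup.
  pose proof (exp_kernel_bounds t a Ht ltac:(lra)).
  pose proof (Hl a ltac:(lra)). pose proof (Hl b ltac:(lra)).
  assert (V a <= V b) by (apply V_nondecr; lra).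
  assert (exp_kernel t a * (V b - V a) <= 1 * (V b - V a)) by (apply Rmult_le_compat_r; lra).
  lra.
Qed.

Lemma darboux_values_nonempty t : 0 <= t -> exists s, darboux_values t s.
Proof.
  intros Ht. destruct (darboux_exp_ex t 1 1 Ht ltac:(lra)) as [I [HI _]].
  exists I, 1, 1. split; [lra | exact HI].
Qed.

Lemma darboux_values_enlarge t a0 b0 s0 a b :
  0 <= t -> 0 < a <= a0 -> a0 <= b0 <= b -> is_darboux (exp_kernel t) V a0 b0 s0 ->
  exists I, darboux_values t I /\ is_RS_integral (exp_kernel t) V a b I /\ s0 <= I.
Proof.
  intros Ht Ha Hb Hs0.
  destruct (darboux_exp_ex t a b Ht ltac:(lra)) as [I [HI HRS]].
  exists I. split; [exists a, b; split; [lra | exact HI] | split; [exact HRS |]].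
  exact (darboux_interval_mono _ V (exp_kernel_nonincr t Ht) (exp_kernel_nonneg t Ht) V_nondecr
           t Ht (exp_kernel_lipschitz t t ltac:(lra)) a0 b0 a b s0 I
           ltac:(lra) ltac:(lra) ltac:(lra) ltac:(lra) Hs0 HI).
Qed.

Lemma lub_is_LS_integral t J :
  0 <= t -> is_lub (darboux_values t) J -> is_LS_integral_pos (exp_kernel t) V J.
Proof.
  intros Ht HJ e He.
  destruct (lub_approx _ J e HJ He) as [s0 [[a0 [b0 [Hab0 Hs0]]] Hlt]].
  exists a0, b0. split; [lra |]. intros a b Ha Hb Hab.
  destruct (darboux_values_enlarge t a0 b0 s0 a b Ht ltac:(lra) ltac:(lra) Hs0)
    as [I [HI [HRS Hle]]].
  exists I. split; [exact HRS |].
  pose proof (proj1 HJ I HI). apply Rabs_def1; lra.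
Qed.

Lemma LS_integral_eq_lub t J J' :
  0 <= t -> is_lub (darboux_values t) J -> is_LS_integral_pos (exp_kernel t) V J' -> J' = J.
Proof.
  intros Ht HJ HJ'. destruct (Req_dec J' J) as [|Hne]; [auto | exfalso].
  set (e := Rabs (J' - J) / 2).
  assert (He : 0 < e) by (unfold e; pose proof (Rabs_pos_lt (J' - J) ltac:(lra)); lra).
  destruct (HJ' (e / 2) ltac:(lra)) as [d [B [Hd HJ'']]].
  destruct (lub_approx _ J (e / 2) HJ ltac:(lra)) as [s0 [[a0 [b0 [Hab0 Hs0]]] Hlt]].
  set (a := Rmin d a0 / 2). set (b := Rmax B b0 + 1).
  assert (0 < Rmin d a0) by (apply Rmin_glb_lt; lra).
  pose proof (Rmin_l d a0). pose proof (Rmin_r d a0).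
  pose proof (Rmax_l B b0). pose proof (Rmax_r B b0).
  destruct (HJ'' a b ltac:(unfold a; lra) ltac:(unfold b; lra) ltac:(unfold a, b; lra))
    as [I' [HRS' Hclose]].
  destruct (darboux_values_enlarge t a0 b0 s0 a b Ht ltac:(unfold a; lra) ltac:(unfold b; lra) Hs0)
    as [I [HI [HRS Hle]]].
  assert (I' = I)
    by (apply (RS_integral_unique (exp_kernel t) V a b); auto; unfold a, b; lra).
  subst I'.
  pose proof (proj1 HJ I HI).
  unfold e in *. revert He Hclose Hlt. unfold Rabs; repeat destruct Rcase_abs; lra.
Qed.

Lemma laplace_is_lub t : 0 <= t -> is_lub (darboux_values t) (laplace V t).
Proof.
  intros Ht.
  destruct (completeness _ (darboux_values_bound t Ht) (darboux_values_nonempty t Ht)) as [J HJ].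
  replace (laplace V t) with J; [exact HJ |]. symmetry.
  apply (LS_integral_eq_lub t J _ Ht HJ).
  unfold laplace. apply epsilon_spec. exists J. exact (lub_is_LS_integral t J Ht HJ).
Qed.

Lemma laplace_nonneg t : 0 <= t -> 0 <= laplace V t.
Proof.
  intros Ht. destruct (darboux_values_nonempty t Ht) as [s Hs].
  pose proof (proj1 (laplace_is_lub t Ht) s Hs).
  destruct Hs as [a [b [Hab Hs]]].
  pose proof (darboux_nonneg _ V (exp_kernel_nonneg t Ht) V_nondecr a b s Hab Hs). lra.
Qed.

Lemma laplace_antitone s t : 0 <= s <= t -> laplace V t <= laplace V s.
Proof.
  intros Hst. apply Rle_plus_epsilon. intros e He.
  destruct (lub_approx _ _ e (laplace_is_lub t ltac:(lra)) He) as [It [[a [b [Hab HIt]]] Hlt]].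
  destruct (darboux_exp_ex s a b ltac:(lra) Hab) as [Is [HIs _]].
  assert (It <= Is).
  { apply (darboux_le_integrand V s a b V_nondecr ltac:(lra) ltac:(lra) ltac:(lra)
             (exp_kernel t) (exp_kernel s) It Is); auto.
    - apply exp_kernel_lipschitz; lra.
    - intros u Hu. apply exp_kernel_antitone; lra. }
  assert (Is <= laplace V s) by (apply (laplace_is_lub s ltac:(lra)); exists a, b; auto).
  lra.
Qed.

Lemma laplace_midpoint_log_convex x z :
  0 <= x -> 0 <= z ->
  laplace V ((x + z) / 2) * laplace V ((x + z) / 2) <= laplace V x * laplace V z.
Proof.
  intros Hx Hz. set (y := (x + z) / 2). assert (Hy : 0 <= y) by (unfold y; lra).
  pose proof (laplace_nonneg y Hy). pose proof (laplace_nonneg x Hx).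
  pose proof (laplace_nonneg z Hz).
  apply (le_of_le_add_mul _ _ (2 * laplace V y)); [lra |]. intros e He.
  destruct (lub_approx _ _ e (laplace_is_lub y Hy) ltac:(lra)) as [Iy [[a [b [Hab HIy]]] Hlt]].
  destruct (darboux_exp_ex x a b Hx Hab) as [Ix [HIx _]].
  destruct (darboux_exp_ex z a b Hz Hab) as [Iz [HIz _]].
  assert (Ix <= laplace V x) by (apply (laplace_is_lub x Hx); exists a, b; auto).
  assert (Iz <= laplace V z) by (apply (laplace_is_lub z Hz); exists a, b; auto).
  pose proof (darboux_nonneg _ V (exp_kernel_nonneg y Hy) V_nondecr a b Iy Hab HIy).
  pose proof (darboux_nonneg _ V (exp_kernel_nonneg x Hx) V_nondecr a b Ix Hab HIx).
  pose proof (darboux_nonneg _ V (exp_kernel_nonneg z Hz) V_nondecr a b Iz Hab HIz).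
  assert (Iy * Iy <= Ix * Iz).
  { apply (darboux_cauchy_schwarz V (x + z) a b V_nondecr ltac:(lra) ltac:(lra) ltac:(lra)
             (exp_kernel x) (exp_kernel y) (exp_kernel z)); auto.
    - apply exp_kernel_nonneg; lra.
    - apply exp_kernel_nonneg; lra.
    - apply exp_kernel_nonneg; lra.
    - intros u _. apply exp_kernel_midpoint.
    - apply exp_kernel_lipschitz; lra.
    - apply exp_kernel_lipschitz; lra. }
  assert (Ix * Iz <= laplace V x * laplace V z) by (apply Rmult_le_compat; lra).
  assert (0 <= laplace V x * laplace V z) by (apply Rmult_le_pos; lra).
  destruct (Rle_dec e (laplace V y)).
  - assert ((laplace V y - e) * (laplace V y - e) <= Iy * Iy)
      by (apply Rmult_le_compat; lra).
    nra.
  - nra.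
Qed.

End Laplace.

(** * Log-convexity and cutoff times *)

Lemma pow_lt_pow_base (u v : R) (n : nat) : 0 <= u < v -> u ^ S n < v ^ S n.
Proof.
  intros H. simpl.
  assert (u ^ n <= v ^ n) by (apply pow_incr; lra).
  assert (0 < v ^ n) by (apply pow_lt; lra).
  assert (u * u ^ n <= u * v ^ n) by (apply Rmult_le_compat_l; lra).
  assert (u * v ^ n < v * v ^ n) by (apply Rmult_lt_compat_r; lra).
  lra.
Qed.

Lemma pow2_unbounded (r : R) : exists k, r <= 2 ^ k.
Proof.
  destruct (Pow_x_infinity 2 ltac:(rewrite Rabs_pos_eq; lra) r) as [k Hk].
  exists k. specialize (Hk k (Nat.le_refl k)).
  rewrite Rabs_pos_eq in Hk by (apply pow_le; lra). lra.
Qed.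

Lemma pow_le_base (u : R) (N : nat) : 0 <= u <= 1 -> (1 <= N)%nat -> u ^ N <= u.
Proof.
  intros Hu HN. destruct N as [|N]; [lia |]. simpl.
  assert (u ^ N <= 1) by (rewrite <- (pow1 N); apply pow_incr; lra).
  assert (u * u ^ N <= u * 1) by (apply Rmult_le_compat_l; lra). lra.
Qed.

Lemma lt_of_pow_lt (u v : R) (N : nat) : 0 <= u -> 0 <= v -> u ^ N < v ^ N -> u < v.
Proof.
  intros Hu Hv H. apply Rnot_le_lt. intros Hvu.
  assert (v ^ N <= u ^ N) by (apply pow_incr; lra). lra.
Qed.

Lemma log_convex_dyadic (g : R -> R) x z :
  (forall u, 0 <= u -> 0 <= g u) ->
  (forall u v, 0 <= u -> 0 <= v -> g ((u + v) / 2) * g ((u + v) / 2) <= g u * g v) ->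
  0 <= x <= z -> forall k, g (x + (z - x) / 2 ^ k) ^ (2 ^ k) <= g x ^ (2 ^ k - 1) * g z.
Proof.
  intros Hg0 Hg Hxz. induction k as [|k IH].
  - simpl. replace (x + (z - x) / 1) with z by field. lra.
  - assert (h2k : 1 <= 2 ^ k) by (apply pow_R1_Rle; lra).
    set (p := x + (z - x) / 2 ^ k) in *.
    assert (hp : x <= p <= z).
    { assert (0 <= (z - x) / 2 ^ k)
        by (apply Rmult_le_pos; [lra | left; apply Rinv_0_lt_compat; lra]).
      assert ((z - x) / 2 ^ k <= z - x).
      { apply (Rmult_le_reg_r (2 ^ k)); [lra |].
        unfold Rdiv. rewrite Rmult_assoc, Rinv_l by lra. nra. }
      unfold p. lra. }
    replace (x + (z - x) / 2 ^ S k) with ((x + p) / 2) by (unfold p; simpl; field; lra).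
    assert (hN : (2 ^ k <> 0)%nat) by (apply Nat.pow_nonzero; lia).
    replace (2 ^ S k)%nat with (2 ^ k + 2 ^ k)%nat by (simpl; lia).
    replace (2 ^ k + 2 ^ k - 1)%nat with (2 ^ k + (2 ^ k - 1))%nat by lia.
    rewrite !pow_add.
    set (N := (2 ^ k)%nat) in *.
    assert (Hmid : (g ((x + p) / 2) * g ((x + p) / 2)) ^ N <= (g x * g p) ^ N).
    { apply pow_incr. split; [apply Rmult_le_pos; apply Hg0; lra | apply Hg; lra]. }
    rewrite !Rpow_mult_distr in Hmid.
    assert (0 <= g x ^ N) by (apply pow_le, Hg0; lra).
    assert (g x ^ N * g p ^ N <= g x ^ N * (g x ^ (N - 1) * g z))
      by (apply Rmult_le_compat_l; auto).
    lra.
Qed.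

Lemma crossing_time (g : R -> R) (alpha beta h : R) :
  0 <= alpha <= beta -> (forall s u, 0 <= s <= u -> g u <= g s) ->
  {T : R | alpha <= T <= beta /\ (forall s, T < s <= beta -> g s <= h) /\
           (h < g alpha -> forall s, 0 <= s < T -> h < g s)}.
Proof.
  intros Hab Hg.
  set (E := fun s => s <= alpha \/ (s <= beta /\ h < g s)).
  assert (HE : bound E) by (exists beta; intros s [Hs | [Hs _]]; lra).
  assert (HE0 : exists s, E s) by (exists alpha; left; lra).
  destruct (completeness E HE HE0) as [T HT].
  exists T. split; [| split].
  - split; [apply (proj1 HT); left; lra | apply (proj2 HT); intros s [Hs | [Hs _]]; lra].
  - intros s Hs. apply Rnot_lt_le. intros Hhs.
    assert (s <= T) by (apply (proj1 HT); right; split; lra). lra.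
  - intros Hha s Hs.
    destruct (lub_approx E T (T - s) HT ltac:(lra)) as [e [[He | [_ He]] Hse]].
    + pose proof (Hg s alpha ltac:(lra)). lra.
    + pose proof (Hg s e ltac:(lra)). lra.
Qed.

Lemma dyadic_shift_le A B t T x z delta k :
  0 < A -> 0 < t -> A * t <= T -> 0 <= x <= z -> z <= B * t -> 0 < delta ->
  B / (A * delta) <= 2 ^ k -> (z - x) / 2 ^ k <= delta * T.
Proof.
  intros HA Ht HT Hxz Hz Hd Hk.
  assert (h2k : 0 < 2 ^ k) by (apply pow_lt; lra).
  assert (B <= 2 ^ k * (A * delta)).
  { apply (Rmult_le_compat_r (A * delta)) in Hk; [| apply Rmult_le_pos; lra].
    unfold Rdiv in Hk.
    rewrite Rmult_assoc, Rinv_l in Hk by (apply Rgt_not_eq, Rmult_lt_0_compat; lra).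
    lra. }
  assert (B * t <= 2 ^ k * delta * (A * t)) by nra.
  assert (2 ^ k * delta * (A * t) <= 2 ^ k * delta * T)
    by (apply Rmult_le_compat_l; [apply Rmult_le_pos |]; lra).
  apply (Rmult_le_reg_r (2 ^ k)); [lra |].
  unfold Rdiv. rewrite Rmult_assoc, Rinv_l by lra. lra.
Qed.

Section PrecutoffToCutoff.

Variable L : nat -> R -> R.
Hypothesis L_nonneg : forall n s, 0 <= s -> 0 <= L n s.
Hypothesis L_antitone : forall n s u, 0 <= s <= u -> L n u <= L n s.
Hypothesis L_log_convex :
  forall n u v, 0 <= u -> 0 <= v -> L n ((u + v) / 2) * L n ((u + v) / 2) <= L n u * L n v.

Variables (t : nat -> R) (A B h : R) (N0 : nat).
Hypothesis t_pos : forall n, 0 < t n.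
Hypothesis A_pos : 0 < A.
Hypothesis A_lt_B : A < B.
Hypothesis L_vanishes_at_B : Un_cv (fun n => L n (B * t n)) 0.
Hypothesis h_pos : 0 < h.
Hypothesis h_le_1 : h <= 1.
Hypothesis L_above_at_A : forall n, (N0 <= n)%nat -> h < L n (A * t n).

Lemma At_le_Bt n : 0 <= A * t n <= B * t n.
Proof. pose proof (t_pos n). split; nra. Qed.

Definition cutoff_time (n : nat) : R :=
  proj1_sig (crossing_time (L n) (A * t n) (B * t n) h (At_le_Bt n) (L_antitone n)).

Lemma cutoff_time_spec n :
  A * t n <= cutoff_time n <= B * t n /\
  (forall s, cutoff_time n < s <= B * t n -> L n s <= h) /\
  ((N0 <= n)%nat -> forall s, 0 <= s < cutoff_time n -> h < L n s).
Proof.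
  unfold cutoff_time. destruct (crossing_time _ _ _ _ _ _) as [T [HT [Hafter Hbefore]]]. simpl.
  split; [exact HT | split; [exact Hafter |]].
  intros Hn. apply Hbefore, L_above_at_A, Hn.
Qed.

Lemma cutoff_time_pos n : 0 < cutoff_time n.
Proof. destruct (cutoff_time_spec n) as [[HT _] _]. pose proof (t_pos n). nra. Qed.

Lemma dyadic_point_near n x delta k :
  0 < delta -> B / (A * delta) <= 2 ^ k -> 0 <= x <= B * t n ->
  exists p, x <= p <= x + delta * cutoff_time n /\
    L n p ^ (2 ^ k) <= L n x ^ (2 ^ k - 1) * L n (B * t n).
Proof.
  intros Hd Hk Hx. exists (x + (B * t n - x) / 2 ^ k).
  destruct (cutoff_time_spec n) as [[HT _] _]. pose proof (t_pos n).
  assert ((B * t n - x) / 2 ^ k <= delta * cutoff_time n)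
    by (apply (dyadic_shift_le A B (t n)); lra).
  assert (0 <= (B * t n - x) / 2 ^ k)
    by (apply Rmult_le_pos; [lra | left; apply Rinv_0_lt_compat, pow_lt; lra]).
  split; [lra |]. apply log_convex_dyadic; auto.
Qed.

Lemma L_vanishes_after_cutoff a : 1 < a -> Un_cv (fun n => L n (a * cutoff_time n)) 0.
Proof.
  intros Ha e He.
  destruct (pow2_unbounded (B / (A * ((a - 1) / 2)))) as [k Hk].
  set (N := (2 ^ k)%nat).
  assert (HN : (1 <= N)%nat) by (pose proof (Nat.pow_nonzero 2 k ltac:(lia)); unfold N; lia).
  set (eta := Rmin e 1).
  assert (Heta : 0 < eta <= 1 /\ eta <= e)
    by (unfold eta; split; [split; [apply Rmin_glb_lt; lra | apply Rmin_r] | apply Rmin_l]).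
  pose proof (pow_le_base eta N ltac:(lra) HN).
  destruct (L_vanishes_at_B (eta ^ N) ltac:(apply pow_lt; lra)) as [N1 HN1].
  exists N1. intros n Hn. specialize (HN1 n Hn). unfold R_dist in *. rewrite Rminus_0_r in *.
  destruct (cutoff_time_spec n) as [[HT1 HT2] [Hafter _]].
  pose proof (cutoff_time_pos n). pose proof (t_pos n).
  set (T := cutoff_time n) in *. set (z := B * t n) in *.
  assert (Hz : 0 <= L n z) by (apply L_nonneg; unfold z; nra).
  rewrite Rabs_right in HN1 by lra.
  rewrite Rabs_right by (apply Rle_ge, L_nonneg; nra).
  destruct (Rle_dec z (a * T)).
  - pose proof (L_antitone n z (a * T) ltac:(unfold z in *; nra)). lra.
  - set (x := (1 + a) / 2 * T).
    assert (HLx : L n x <= h) by (apply Hafter; unfold x; nra).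
    pose proof (L_nonneg n x ltac:(unfold x; nra)).
    destruct (dyadic_point_near n x ((a - 1) / 2) k ltac:(lra) Hk ltac:(unfold x, z in *; nra))
      as [p [Hp Hd]]. fold N T z in Hp, Hd.
    assert (L n x ^ (N - 1) <= 1) by (rewrite <- (pow1 (N - 1)); apply pow_incr; lra).
    assert (L n x ^ (N - 1) * L n z <= 1 * L n z) by (apply Rmult_le_compat_r; lra).
    pose proof (L_antitone n p (a * T) ltac:(unfold x in Hp; nra)).
    assert (L n (a * T) ^ N <= L n p ^ N) by (apply pow_incr; split; [apply L_nonneg |]; nra).
    assert (L n (a * T) < eta) by (apply (lt_of_pow_lt _ _ N); [apply L_nonneg; nra | lra | lra]).
    lra.
Qed.

Lemma L_explodes_before_cutoff a :
  0 < a < 1 -> forall K, exists N, forall n, (N <= n)%nat -> K < L n (a * cutoff_time n).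
Proof.
  intros Ha K.
  set (K' := Rmax K 1). assert (HK : K <= K' /\ 1 <= K') by (split; [apply Rmax_l | apply Rmax_r]).
  destruct (pow2_unbounded (B / (A * ((1 - a) / 2)))) as [k Hk].
  set (N := (2 ^ k)%nat).
  assert (HN : (1 <= N)%nat) by (pose proof (Nat.pow_nonzero 2 k ltac:(lia)); unfold N; lia).
  assert (HKN : 0 < K' ^ (N - 1)) by (apply pow_lt; lra).
  set (c0 := h ^ N / K' ^ (N - 1)).
  assert (Hc0 : 0 < c0) by (apply Rdiv_lt_0_compat; [apply pow_lt |]; lra).
  destruct (L_vanishes_at_B c0 Hc0) as [N1 HN1].
  exists (Nat.max N0 N1). intros n Hn. specialize (HN1 n ltac:(lia)).
  unfold R_dist in HN1. rewrite Rminus_0_r in HN1.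
  destruct (cutoff_time_spec n) as [[HT1 HT2] [_ Hbefore]].
  pose proof (cutoff_time_pos n). pose proof (t_pos n).
  set (T := cutoff_time n) in *. set (z := B * t n) in *.
  assert (Hz : 0 <= L n z) by (apply L_nonneg; unfold z; nra).
  rewrite Rabs_right in HN1 by lra.
  apply Rnot_le_lt. intros Hle.
  pose proof (L_nonneg n (a * T) ltac:(nra)).
  destruct (dyadic_point_near n (a * T) ((1 - a) / 2) k ltac:(lra) Hk ltac:(unfold z in *; nra))
    as [p [Hp Hd]]. fold N T z in Hp, Hd.
  assert (h ^ N < L n p ^ N).
  { replace N with (S (N - 1)) by lia. apply pow_lt_pow_base.
    split; [lra | apply Hbefore; [lia | nra]]. }
  assert (L n (a * T) ^ (N - 1) <= K' ^ (N - 1)) by (apply pow_incr; lra).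
  assert (L n (a * T) ^ (N - 1) * L n z <= K' ^ (N - 1) * L n z)
    by (apply Rmult_le_compat_r; lra).
  assert (K' ^ (N - 1) * L n z < K' ^ (N - 1) * c0) by (apply Rmult_lt_compat_l; lra).
  assert (K' ^ (N - 1) * c0 = h ^ N) by (unfold c0; field; lra).
  lra.
Qed.

Lemma precutoff_cutoff_of_log_convex :
  exists T : nat -> R, (forall n, 0 < T n) /\
    (forall a, 1 < a -> Un_cv (fun n => L n (a * T n)) 0) /\
    (forall a, 0 < a < 1 -> forall K, exists N, forall n, (N <= n)%nat -> K < L n (a * T n)).
Proof.
  exists cutoff_time.
  split; [exact cutoff_time_pos |].
  split; [exact L_vanishes_after_cutoff | exact L_explodes_before_cutoff].
Qed.

End PrecutoffToCutoff.

Lemma is_limsup_PInf_of_minorant (u w : nat -> R) (M : ER) :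
  is_limsup u M -> (forall n, w n <= u n) ->
  (forall K, exists N, forall n, (N <= n)%nat -> K < w n) -> M = PInf.
Proof.
  intros HM Hwu Hw. destruct M as [l | | ]; [exfalso | reflexivity | exfalso].
  - destruct (HM 1 ltac:(lra)) as [_ [N1 HN1]]. destruct (Hw (l + 1)) as [N2 HN2].
    specialize (HN1 (Nat.max N1 N2) ltac:(lia)). specialize (HN2 (Nat.max N1 N2) ltac:(lia)).
    specialize (Hwu (Nat.max N1 N2)). lra.
  - destruct (HM 0) as [N1 HN1]. destruct (Hw 0) as [N2 HN2].
    specialize (HN1 (Nat.max N1 N2) ltac:(lia)). specialize (HN2 (Nat.max N1 N2) ltac:(lia)).
    specialize (Hwu (Nat.max N1 N2)). lra.
Qed.

Lemma liminf_pos_of_tends_to (u : nat -> R) (M : ER) : ER_pos M -> tends_to u M -> liminf_pos u.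
Proof.
  destruct M as [l | | ]; simpl; intros HM Hu; [| | contradiction].
  - exists (l / 2). split; [lra |].
    destruct (Hu (l / 2) ltac:(lra)) as [N HN]. exists N. intros n Hn.
    specialize (HN n Hn). unfold R_dist in HN. revert HN. unfold Rabs; destruct Rcase_abs; lra.
  - exists 1. split; [lra |]. destruct (Hu 1) as [N HN]. exists N. exact HN.
Qed.

Theorem theorem2p1 (V : nat -> R -> R) (M : ER) :
  (forall n, in_classV (V n)) ->
  is_limsup (fun n => laplace (V n) 0) M ->
  ER_pos M ->
  (has_precutoff V <-> has_cutoff V M).
Proof.
  intros HV Hlimsup HM.
  pose proof (fun n => laplace_nonneg (V n) (HV n)) as L_nonneg.
  pose proof (fun n => laplace_antitone (V n) (HV n)) as L_antitone.
  pose proof (fun n => laplace_midpoint_log_convex (V n) (HV n)) as L_log_convex.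
  split.
  - intros [t [Ht [A [B [HA [HAB [HB [c [Hc [N0 HN0]]]]]]]]]].
    set (h := Rmin c 1 / 2).
    assert (Hh : 0 < h /\ h <= 1 /\ h < c) by (unfold h, Rmin; destruct Rle_dec; lra).
    destruct (precutoff_cutoff_of_log_convex (fun n => laplace (V n))
                L_nonneg L_antitone L_log_convex t A B h N0 Ht HA HAB HB
                ltac:(lra) ltac:(lra) ltac:(intros n Hn; specialize (HN0 n Hn); lra))
      as [T [HT [Hvanish Hexplode]]].
    assert (M = PInf) as ->.
    { apply (is_limsup_PInf_of_minorant _ (fun n => laplace (V n) (1 / 2 * T n)) M Hlimsup).
      - intros n. apply L_antitone. pose proof (HT n). lra.
      - apply Hexplode. lra. }
    exists T. split; [exact HT | split; [exact Hvanish | exact Hexplode]].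
  - intros [t [Ht [Hvanish Htends]]].
    exists t. split; [exact Ht |]. exists (1 / 2), 2.
    split; [lra | split; [lra | split]].
    + apply Hvanish. lra.
    + apply (liminf_pos_of_tends_to _ M HM), Htends. lra.
Qed.
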